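(* Let $B\subseteq A$ be commutative unital $\mathbb{R}$-algebras with $A=B[f]$ for some $f\in A$, let $Q\subseteq B$ be an archimedean quadratic module of $B$, and let $Q'\subseteq A$ be a quadratic module of $A$ with $Q\subseteq Q'\cap B$. If either $f$ is integral over $B$, or $N-f^2\in Q'$ for some $N\in\mathbb{N}$, then $Q'$ is archimedean in $A$.
   Context: A quadratic module of a commutative unital $\mathbb{R}$-algebra $C$ is a subset $Q\subseteq C$ with $Q+Q\subseteq Q$, $c^2Q\subseteq Q$ for all $c\in C$, and $1\in Q$. It is archimedean in $C$ if for every $c\in C$ there is an integer $n\ge1$ with $n+c\in Q$. *)

From HB Require Import structures.
From mathcomp Require Import all_boot all_order all_algebra.
From mathcomp Require Import reals.
Set Implicit Arguments. Unset Strict Implicit. Unset Printing Implicit Defensive.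
Import Order.TTheory GRing.Theory Num.Theory.
Local Open Scope ring_scope.

Definition is_subalgebra (R : realType) (A : comAlgType R) (B : A -> Prop) : Prop :=
  [/\ B 1,
      (forall x y, B x -> B y -> B (x + y)),
      (forall (r : R) x, B x -> B (r *: x)) &
      (forall x y, B x -> B y -> B (x * y))].

Definition quadratic_module (R : realType) (A : comAlgType R) (C Q : A -> Prop) : Prop :=
  [/\ (forall x, Q x -> C x),
      (forall x y, Q x -> Q y -> Q (x + y)),
      (forall c x, C c -> Q x -> Q (c ^+ 2 * x)) &
      Q 1].

Definition archimedean_in (R : realType) (A : comAlgType R) (C Q : A -> Prop) : Prop :=
  forall c, C c -> exists n : nat, (1 <= n)%N /\ Q (n%:R + c).

Definition generated_by (R : realType) (A : comAlgType R) (B : A -> Prop) (f : A) : Prop :=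
  forall a : A, exists p : {poly A}, (forall i, B p`_i) /\ a = p.[f].

Definition integral_over (R : realType) (A : comAlgType R) (B : A -> Prop) (f : A) : Prop :=
  exists p : {poly A}, [/\ p \is monic, (forall i, B p`_i) & root p f].

From HB Require Import structures.
From mathcomp Require Import all_boot all_order all_algebra.
From mathcomp Require Import reals.
From mathcomp Require Import ring lra.
Set Implicit Arguments. Unset Strict Implicit. Unset Printing Implicit Defensive.
Import Order.TTheory GRing.Theory Num.Theory.
Local Open Scope ring_scope.

(* Call a M-bounded if r - a and r + a lie in M for some real r. The bounded
   elements form a subring containing the scalars, and M is archimedean exactly
   when everything is bounded. Elements of B are Q'-bounded because Q is
   archimedean in B, so it remains to show that f is bounded. If N - f^2 is in
   Q' this is immediate. If f^d = - sum_(i<d) b_i f^i with bounded b_i, rescale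
   g = s f with a small real s > 0: then g^d = sum_(i<d) s^(d-i) (-b_i) g^i has
   small coefficients, and combining, for the order x <= y iff y - x is in Q',
   g^(2i) <= (d - i) + g^(2d) with
   (sum_(i<d) x_i)^2 <= 4^d max_i x_i^2 yields g^(2d) <= d, so g is bounded,
   hence so is f. *)

Lemma root_monic_exp (S : nzRingType) (p : {poly S}) (x : S) :
  p \is monic -> root p x ->
  exists2 d, (0 < d)%N & x ^+ d = - \sum_(i < d) p`_i * x ^+ i.
Proof.
move=> p_monic /rootP px0; have p_gt0 : (0 < size p)%N by rewrite size_poly_gt0 monic_neq0.
have px : x ^+ (size p).-1 = - \sum_(i < (size p).-1) p`_i * x ^+ i.
  move: px0; rewrite horner_coef -(prednK p_gt0) big_ord_recr /= -/(lead_coef p).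
  by rewrite (monicP p_monic) mul1r addrC => /eqP; rewrite addr_eq0 => /eqP.
exists (size p).-1 => //; rewrite lt0n; apply: contra_eqN px => /eqP ->.
by rewrite big_ord0 oppr0 expr0 oner_neq0.
Qed.

Section QuadraticModule.
Variables (R : realType) (A : comAlgType R) (M : A -> Prop).
Hypothesis qm : quadratic_module (fun _ => True) M.

Local Notation ia := (in_alg A).
Local Notation "x <=q y" := (M (y - x)) (at level 70, no associativity).

Lemma qmD x y : M x -> M y -> M (x + y). Proof. by case: qm => _ addM _ _; apply: addM. Qed.

Lemma qmMsqr c x : M x -> M (c ^+ 2 * x). Proof. by case: qm => _ _ mulM _; apply: mulM. Qed.

Lemma qm1 : M 1. Proof. by case: qm. Qed.

Lemma qm_sqr c : M (c ^+ 2).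
Proof. by rewrite -[c ^+ 2]mulr1; apply/qmMsqr/qm1. Qed.

Lemma qm0 : M 0. Proof. by have := qm_sqr 0; rewrite expr0n. Qed.

Lemma qm_scale r x : 0 <= r -> M x -> M (ia r * x).
Proof. by move=> r_ge0 Mx; rewrite -[r]sqr_sqrtr // rmorphXn; apply: qmMsqr. Qed.

Lemma qm_alg r : 0 <= r -> M (ia r).
Proof. by move=> r_ge0; rewrite -[ia r]mulr1; apply/qm_scale/qm1. Qed.

Lemma qm_natrM n x : M x -> M (n%:R * x).
Proof. by rewrite -[n%:R](rmorph_nat ia); apply: qm_scale. Qed.

Lemma qm_natr n : M n%:R.
Proof. by rewrite -[n%:R]mulr1; apply/qm_natrM/qm1. Qed.

Lemma qm_unscale r x : 0 < r -> M (ia r * x) -> M x.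
Proof.
move=> r_gt0 Mrx; have -> : x = ia r^-1 * (ia r * x).
  by rewrite mulrA -rmorphM mulVf ?gt_eqF // rmorph1 mul1r.
by apply: qm_scale; rewrite // invr_ge0 ltW.
Qed.

Lemma qle_trans y x z : x <=q y -> y <=q z -> x <=q z.
Proof. by move=> Mxy Myz; rewrite -(subrKA y); apply: qmD. Qed.

Lemma qleD x1 y1 x2 y2 : x1 <=q y1 -> x2 <=q y2 -> x1 + x2 <=q y1 + y2.
Proof. by move=> M1 M2; rewrite opprD addrACA; apply: qmD. Qed.

Lemma qle_scale r x y : 0 <= r -> x <=q y -> ia r * x <=q ia r * y.
Proof. by move=> r_ge0 Mxy; rewrite -mulrBr; apply: qm_scale. Qed.

Lemma qle_scale_mono r r' x : r <= r' -> M x -> ia r * x <=q ia r' * x.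
Proof. by move=> le_rr' Mx; rewrite -mulrBl -rmorphB; apply: qm_scale; rewrite ?subr_ge0. Qed.

Lemma qle_alg r r' x : r <= r' -> M (ia r + x) -> M (ia r' + x).
Proof.
move=> le_rr' Mx; have -> : ia r' + x = ia (r' - r) + (ia r + x) by ring.
by apply: qmD => //; apply: qm_alg; rewrite subr_ge0.
Qed.

Definition bounded a := exists r : R, M (ia r - a) /\ M (ia r + a).

Lemma bounded_of_bounds r1 r2 a : M (ia r1 - a) -> M (ia r2 + a) -> bounded a.
Proof.
move=> Mr1a Mr2a; exists (Num.max r1 r2); split.
  by apply: qle_alg Mr1a; rewrite le_max lexx.
by apply: qle_alg Mr2a; rewrite le_max lexx orbT.
Qed.

Lemma bounded_alg r : bounded (ia r).
Proof. by apply: (@bounded_of_bounds r (- r)); rewrite ?rmorphN ?subrr ?addNr; exact: qm0. Qed.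

Lemma boundedD a b : bounded a -> bounded b -> bounded (a + b).
Proof.
move=> [r [Mra Mra']] [q [Mqb Mqb']]; exists (r + q); rewrite rmorphD; split.
  by rewrite opprD addrACA; apply: qmD.
by rewrite addrACA; apply: qmD.
Qed.

Lemma boundedN a : bounded a -> bounded (- a).
Proof. by move=> [r [Mra Mra']]; exists r; rewrite opprK. Qed.

Lemma bounded_sqr_le a : bounded a -> exists2 s, 0 <= s & a ^+ 2 <=q ia s.
Proof.
move=> [r0 [Mra Mra']].
have [r r_gt0 [{}Mra {}Mra']] : exists2 r, 0 < r & M (ia r - a) /\ M (ia r + a).
  exists (Num.max r0 1); first by rewrite lt_max ltr01 orbT.
  by split; [apply: qle_alg Mra|apply: qle_alg Mra']; rewrite le_max lexx.
exists (r ^+ 2); first exact: sqr_ge0.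
apply: (@qm_unscale (2 * r)); first lra.
have -> : ia (2 * r) * (ia (r ^+ 2) - a ^+ 2) =
  (ia r + a) ^+ 2 * (ia r - a) + (ia r - a) ^+ 2 * (ia r + a) by ring.
by apply: qmD; apply: qmMsqr.
Qed.

Lemma bounded_of_sqr_le s a : a ^+ 2 <=q ia s -> bounded a.
Proof.
move=> Ms; exists (s + 1); split; apply: (@qm_unscale 4) => //.
  have -> : ia 4 * (ia (s + 1) - a) = ia 4 * (ia s - a ^+ 2) + (2%:R * a - 1) ^+ 2 + ia 3 by ring.
  by apply: qmD; [apply: qmD; [apply: qm_scale|apply: qm_sqr]|apply: qm_alg].
have -> : ia 4 * (ia (s + 1) + a) = ia 4 * (ia s - a ^+ 2) + (2%:R * a + 1) ^+ 2 + ia 3 by ring.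
by apply: qmD; [apply: qmD; [apply: qm_scale|apply: qm_sqr]|apply: qm_alg].
Qed.

Lemma boundedM a b : bounded a -> bounded b -> bounded (a * b).
Proof.
move=> /bounded_sqr_le [s s_ge0 Ma] /bounded_sqr_le [t t_ge0 Mb].
apply: (@bounded_of_sqr_le (s * t)); rewrite exprMn rmorphM.
apply: (@qle_trans (ia s * b ^+ 2)); first by rewrite -mulrBl mulrC; apply: qmMsqr.
by rewrite -mulrBr; apply: qm_scale.
Qed.

Lemma boundedX a n : bounded a -> bounded (a ^+ n).
Proof.
move=> ba; elim: n => [|n ban]; last by rewrite exprS; apply: boundedM.
by rewrite expr0 -(rmorph1 ia); apply: bounded_alg.
Qed.

Lemma bounded_horner (p : {poly A}) x :
  (forall i, bounded p`_i) -> bounded x -> bounded p.[x].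
Proof.
move=> bp bx; rewrite horner_coef; apply: (big_ind bounded).
- by rewrite -(rmorph0 ia); apply: bounded_alg.
- exact: boundedD.
by move=> i _; apply: boundedM => //; apply: boundedX.
Qed.

Lemma bounded_archimedean a : bounded a -> exists n : nat, (1 <= n)%N /\ M (n%:R + a).
Proof.
move=> [r [_ Mra]]; exists (Num.truncn r).+1; split => //.
by rewrite -(rmorph_nat ia); apply: qle_alg Mra; rewrite ltW // truncnS_gt.
Qed.

Lemma sqr_exp_le_weighted t k :
  k.+1%:R * (t ^+ k) ^+ 2 <=q 1 + k%:R * (t ^+ k.+1) ^+ 2.
Proof.
elim: k => [|k IHk]; first by rewrite (_ : _ - _ = 0); [exact: qm0|rewrite expr0; ring].
have -> : 1 + k.+1%:R * (t ^+ k.+2) ^+ 2 - k.+2%:R * (t ^+ k.+1) ^+ 2 =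
    (1 + k%:R * (t ^+ k.+1) ^+ 2 - k.+1%:R * (t ^+ k) ^+ 2)
    + k.+1%:R * (t ^+ k * (t ^+ 2 - 1)) ^+ 2.
  by rewrite !exprSr; ring.
by apply: qmD => //; apply: qm_natrM; apply: qm_sqr.
Qed.

Lemma sqr_exp_le_succ t k : (t ^+ k) ^+ 2 <=q 1 + (t ^+ k.+1) ^+ 2.
Proof.
apply: (@qm_unscale k.+1%:R); first by rewrite ltr0Sn.
have -> : ia k.+1%:R * (1 + (t ^+ k.+1) ^+ 2 - (t ^+ k) ^+ 2) =
    (1 + k%:R * (t ^+ k.+1) ^+ 2 - k.+1%:R * (t ^+ k) ^+ 2) + k%:R + (t ^+ k.+1) ^+ 2.
  by rewrite rmorph_nat; ring.
by apply: qmD; [apply: qmD; [apply: sqr_exp_le_weighted|apply: qm_natr]|apply: qm_sqr].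
Qed.

Lemma sqr_exp_le t i n : (t ^+ i) ^+ 2 <=q n%:R + (t ^+ (i + n)) ^+ 2.
Proof.
elim: n => [|n IHn]; first by rewrite addn0 add0r subrr; exact: qm0.
apply: qle_trans IHn _; rewrite addnS.
have -> : n.+1%:R + (t ^+ (i + n).+1) ^+ 2 - (n%:R + (t ^+ (i + n)) ^+ 2) =
  1 + (t ^+ (i + n).+1) ^+ 2 - (t ^+ (i + n)) ^+ 2 by rewrite -addn1 natrD; ring.
exact: sqr_exp_le_succ.
Qed.

Lemma qle_sqr_sum n (x : nat -> A) Y :
  M Y -> (forall i, (i < n)%N -> x i ^+ 2 <=q Y) ->
  (\sum_(i < n) x i) ^+ 2 <=q ia (4 ^+ n) * Y.
Proof.
move=> MY; elim: n => [|n IHn] xY.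
  by rewrite big_ord0 expr0 rmorph1 mul1r expr0n subr0.
rewrite big_ord_recr /=; set S := \sum_(i < n) x i.
have MS := IHn (fun i lt_in => xY i (ltnW lt_in)).
have Mx := xY n (ltnSn n).
have four_ge1 : 1 <= (4 : R) ^+ n by apply: exprn_ege1; lra.
have -> : ia (4 ^+ n.+1) * Y - (S + x n) ^+ 2 =
    2%:R * (ia (4 ^+ n) * Y - S ^+ 2) + (S - x n) ^+ 2 + 2%:R * (Y - x n ^+ 2)
    + ia (2 * 4 ^+ n - 2) * Y.
  by rewrite exprS; ring.
apply: qmD; last by apply: qm_scale => //; lra.
by apply: qmD; [apply: qmD; [apply: qm_natrM|apply: qm_sqr]|apply: qm_natrM].
Qed.

Lemma bounded_sqr_le_uniform n (c : nat -> A) :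
  (forall i, (i < n)%N -> bounded (c i)) ->
  exists2 m, 0 <= m & forall i, (i < n)%N -> c i ^+ 2 <=q ia m.
Proof.
elim: n => [|n IHn] bc; first by exists 0.
have [m m_ge0 cm] := IHn (fun i lt_in => bc i (ltnW lt_in)).
have [s s_ge0 cs] := bounded_sqr_le (bc n (ltnSn n)).
exists (m + s) => [|i]; first lra.
rewrite ltnS leq_eqVlt => /predU1P[->|/cm Mm]; rewrite rmorphD -addrA.
  by apply: qmD => //; apply: qm_alg.
by rewrite addrCA; apply: qmD => //; apply: qm_alg.
Qed.

Lemma sqr_exp_le_of_scaled_root d (c : nat -> A) (m s : R) g :
  0 <= m -> 0 < s <= 1 -> 2 * 4 ^+ d * m * s ^+ 2 <= 1 ->
  (forall i, (i < d)%N -> c i ^+ 2 <=q ia m) ->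
  g ^+ d = \sum_(i < d) ia (s ^+ (d - i)) * c i * g ^+ i ->
  (g ^+ d) ^+ 2 <=q d%:R.
Proof.
move=> m_ge0 /andP[s_gt0 s_le1] small cm gd.
set Y := d%:R + (g ^+ d) ^+ 2.
have MY : M Y by apply: qmD; [apply: qm_natr|apply: qm_sqr].
have term_le i : (i < d)%N ->
    (ia (s ^+ (d - i)) * c i * g ^+ i) ^+ 2 <=q ia (m * s ^+ 2) * Y.
  move=> lt_id; set w := s ^+ (d - i).
  have w_ge0 : 0 <= w by rewrite exprn_ge0 // ltW.
  have w_le_s : w <= s.
    by rewrite /w -(subnSK lt_id) exprS ler_piMr ?exprn_ile1 // ltW.
  apply: (@qle_trans (ia (w ^+ 2 * m) * (g ^+ i) ^+ 2)).
    have -> : ia (w ^+ 2 * m) * (g ^+ i) ^+ 2 - (ia w * c i * g ^+ i) ^+ 2 =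
      (ia w * g ^+ i) ^+ 2 * (ia m - c i ^+ 2) by ring.
    exact/qmMsqr/cm.
  apply: (@qle_trans (ia (w ^+ 2 * m) * Y)).
    apply: qle_scale; first by rewrite mulr_ge0 ?sqr_ge0.
    apply: qle_trans (sqr_exp_le g i (d - i)) _; rewrite subnKC; last exact: ltnW.
    have -> : Y - ((d - i)%:R + (g ^+ d) ^+ 2) = i%:R by rewrite /Y natrB; [ring|exact: ltnW].
    exact: qm_natr.
  by apply: qle_scale_mono => //; rewrite mulrC ler_wpM2l // ler_sqr ?nnegrE ?(ltW s_gt0).
have sum_le := qle_sqr_sum (qm_scale (mulr_ge0 m_ge0 (sqr_ge0 s)) MY) term_le.
rewrite -gd in sum_le.
set e := 4 ^+ d * (m * s ^+ 2).
have e_le : 2 * e <= 1 by rewrite /e 2!mulrA.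
have -> : d%:R - (g ^+ d) ^+ 2 =
    2%:R * (ia (4 ^+ d) * (ia (m * s ^+ 2) * Y) - (g ^+ d) ^+ 2)
    + ia ((1 - 2 * e) * d%:R) + ia (1 - 2 * e) * (g ^+ d) ^+ 2.
  by rewrite /Y /e; ring.
apply: qmD; last by apply: qm_scale; [lra|apply: qm_sqr].
by apply: qmD; [apply: qm_natrM|apply: qm_alg; rewrite mulr_ge0 //; lra].
Qed.

Lemma bounded_root_monic (p : {poly A}) a :
  p \is monic -> (forall i, bounded p`_i) -> root p a -> bounded a.
Proof.
move=> p_monic bp /(root_monic_exp p_monic) [d d_gt0 ad].
have [m m_ge0 cm] := @bounded_sqr_le_uniform d (fun i => - p`_i) (fun i _ => boundedN (bp i)).
set K := 2 * 4 ^+ d * m.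
have K_ge0 : 0 <= K by rewrite !mulr_ge0 ?exprn_ge0.
set s := (1 + K)^-1.
have sK : s * (1 + K) = 1 by rewrite mulVf // gt_eqF //; lra.
have s_gt0 : 0 < s by rewrite invr_gt0; lra.
have s_le1 : s <= 1 by nra.
have small : K * s ^+ 2 <= 1 by nra.
set g := ia s * a.
have gd : g ^+ d = \sum_(i < d) ia (s ^+ (d - i)) * (- p`_i) * g ^+ i.
  rewrite /g exprMn ad -sumrN mulr_sumr; apply: eq_bigr => i _.
  by rewrite -{1}(subnK (ltnW (ltn_ord i))) exprD rmorphXn exprMn; ring.
have s_range : 0 < s <= 1 by rewrite s_gt0 s_le1.
have gd_le := sqr_exp_le_of_scaled_root m_ge0 s_range small cm gd.
have bg : bounded g.
  apply: (@bounded_of_sqr_le ((d - 1)%:R + d%:R)); rewrite rmorphD !rmorph_nat.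
  apply: (@qle_trans ((d - 1)%:R + (g ^+ d) ^+ 2)).
    by have := sqr_exp_le g 1 (d - 1); rewrite expr1 subnKC.
  by apply: qleD => //; rewrite subrr; exact: qm0.
have -> : a = ia s^-1 * g by rewrite /g mulrA -rmorphM mulVf ?gt_eqF // rmorph1 mul1r.
by apply: boundedM => //; apply: bounded_alg.
Qed.

End QuadraticModule.

Theorem proposition3p6 (R : realType) (A : comAlgType R) (B : A -> Prop) (f : A)
    (Q Q' : A -> Prop) :
  is_subalgebra B ->
  generated_by B f ->
  quadratic_module B Q ->
  archimedean_in B Q ->
  quadratic_module (fun _ => True) Q' ->
  (forall x, Q x -> Q' x /\ B x) ->
  (integral_over B f \/ exists N : nat, Q' (N%:R - f ^+ 2)) ->
  archimedean_in (fun _ => True) Q'.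
Proof.
move=> [_ _ B_scale _] gen _ archQ qm' QQ' hf.
have bB b : B b -> bounded Q' b.
  move=> Bb; have BNb : B (- b) by rewrite -scaleN1r; apply: B_scale.
  have [n1 [_ /QQ'[Q'n1b _]]] := archQ b Bb.
  have [n2 [_ /QQ'[Q'n2b _]]] := archQ _ BNb.
  by apply: (@bounded_of_bounds _ _ _ qm' n2%:R n1%:R); rewrite rmorph_nat.
have bf : bounded Q' f.
  case: hf => [[p [p_monic pB proot]]|[N Q'N]].
    by apply: (bounded_root_monic qm' p_monic) => // i; apply: bB.
  by apply: (@bounded_of_sqr_le _ _ _ qm' N%:R); rewrite rmorph_nat.
move=> a _; have [p [pB ->]] := gen a.
by apply: (bounded_archimedean qm'); apply: bounded_horner => // i; apply: bB.
Qed.
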